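(* Let $p,q$ be distinct odd primes, and let $C$, $E'$ be as defined in the context, with $C'=C\cap E'$. If $C=C'$, then $p<q$.
   Context: $\zeta_p=e^{2i\pi/p}$, $E=\mathbb{Z}[\zeta_p,1/p]^*=\{u(1-\zeta_p)^k: u\in\mathbb{Z}[\zeta_p]^*,k\in\mathbb{Z}\}$. $C=\{u\in E: u=\frac{1-\zeta_p^i}{1-\zeta_p^j}\,\omega\,(1-\zeta_p)^k$, $\omega$ a root of unity, $i,j\in\mathbb{N}$ (with the quotient defined), $k\in\mathbb{Z}\}$ (the cyclotomic $p$-units). Let $H=\{\alpha\in\mathbb{Q}(\zeta_p)^*: v_{\mathfrak r}(\alpha)\equiv0\pmod q$ for every prime ideal $\mathfrak r\neq(1-\zeta_p)$ of $\mathbb{Z}[\zeta_p]\}/\mathbb{Q}(\zeta_p)^{*q}$, $H'=\{[\alpha]\in H: \alpha=\beta^q+q^2\gamma$ with $\beta,\gamma\in\mathbb{Z}[\zeta_p,1/p]$, $\beta$ invertible modulo $q^2\mathbb{Z}[\zeta_p,1/p]\}$, and $E'=\{u\in E: [u]\in H'\}$. *)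

From mathcomp Require Import all_boot all_order all_algebra all_field.
Set Implicit Arguments. Unset Strict Implicit. Unset Printing Implicit Defensive.
Import Order.TTheory GRing.Theory Num.Theory.
Local Open Scope ring_scope.

(* zeta_p = e^{2 i pi / p}: p.-root (-1) is the p-th root of -1 with minimal
   nonnegative argument, i.e. e^{i pi / p}; its square is e^{2 i pi / p}. *)
Definition zeta (p : nat) : algC := (p.-root (-1)) ^+ 2.

Definition inQzeta (p : nat) (x : algC) : Prop :=
  exists P : {poly rat}, x = (map_poly ratr P).[zeta p].

Definition inZzp (p : nat) (x : algC) : Prop :=
  exists (k : nat) (P : {poly int}), x * (p%:R) ^+ k = (map_poly intr P).[zeta p].

Definition inE (p : nat) (u : algC) : Prop :=
  inZzp p u /\ exists v, inZzp p v /\ u * v = 1.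

Definition inC (p : nat) (u : algC) : Prop :=
  inE p u /\
  exists (i j : nat) (w : algC) (k : int),
    (1 - zeta p ^+ j != 0) /\
    (exists n : nat, (0 < n)%N /\ w ^+ n = 1) /\
    u = (1 - zeta p ^+ i) / (1 - zeta p ^+ j) * w * (1 - zeta p) ^ k.

Definition inv_mod_q2 (p q : nat) (b : algC) : Prop :=
  exists d e, inZzp p d /\ inZzp p e /\ b * d = 1 + (q%:R) ^+ 2 * e.

(* E' = { u in E : [u] in H' }.  The class [u] in H (mod Q(zeta_p)^{*q}) is
   [alpha] for alpha = u * x^q, x in Q(zeta_p)^*; such alpha automatically has
   all valuations away from (1 - zeta_p) divisible by q, so [u] in H' iff some
   such representative alpha = beta^q + q^2 gamma with beta, gamma in
   Z[zeta_p,1/p] and beta invertible modulo q^2 Z[zeta_p,1/p]. *)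
Definition inE' (p q : nat) (u : algC) : Prop :=
  inE p u /\
  exists x b g, inQzeta p x /\ x != 0 /\ inZzp p b /\ inZzp p g /\
    inv_mod_q2 p q b /\
    u * x ^+ q = b ^+ q + (q%:R) ^+ 2 * g.

(** Suppose q < p and write z = zeta p.  Since (1 - X)^q = 1 - X^q + q h(X) for an
    integer polynomial h, the cyclotomic p-unit u = (1 - z^q) / (1 - z)^q equals
    1 - q t with t = h(z) / (1 - z)^q, and t is not divisible by q in Z[z, 1/p]:
    modulo q, h has degree below p - 1 = deg Phi_p, yet its linear coefficient is -1.
    If u were in E', clearing denominators would give u Z^q = m^q (1 + q^2 c) in
    Z[z, 1/p] with m a positive integer.  The ring Z[z, 1/p] / q is reduced, because
    the Frobenius y(z) |-> y(z^q) has finite order, so the q-part of m can be divided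
    out.  For m prime to q, u = 1 - q t forces Z = m mod q, hence Z^q = m^q mod q^2,
    and then q t m^q = 0 mod q^2, i.e. q divides t. *)

From HB Require Import structures.
From mathcomp Require Import all_boot all_order all_algebra all_field.
From mathcomp Require Import cyclic ring zify boolp.
Set Implicit Arguments. Unset Strict Implicit. Unset Printing Implicit Defensive.
Import Order.TTheory GRing.Theory Num.Theory.
Local Open Scope ring_scope.

Lemma zetaXp p : (0 < p)%N -> zeta p ^+ p = 1.
Proof. by move=> p_gt0; rewrite /zeta exprAC rootCK // sqrrN expr1n. Qed.

Lemma zeta_neq1 p : (1 < p)%N -> zeta p != 1.
Proof.
move=> p_gt1; rewrite /zeta sqrf_eq1 negb_or; apply/andP; split; apply/eqP => z1.
  have := rootCK (ltnW p_gt1) (-1 : algC).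
  by rewrite z1 expr1n => /eqP; rewrite gt_eqF // (lt_trans (ltrN10 _) ltr01).
by have := rootC_lt0 (-1 : algC) p_gt1; rewrite z1 ltrN10.
Qed.

Lemma zeta_prim p : prime p -> p.-primitive_root (zeta p).
Proof.
move=> p_pr; have p_gt0 := prime_gt0 p_pr.
have [m prim_m m_dvd_p] := prim_order_exists p_gt0 (zetaXp p_gt0).
have [m1 | m_ne1] := eqVneq m 1%N.
  by move: (zeta_neq1 (prime_gt1 p_pr)); rewrite -(prim_expr_order prim_m) m1 expr1 eqxx.
case/primeP: p_pr => _ /(_ m m_dvd_p); rewrite (negPf m_ne1) => /= /eqP m_eq_p.
by rewrite m_eq_p in prim_m.
Qed.

Section ZetaRing.
Variable p : nat.

Definition Zzp : {pred algC} := fun x => `[< inZzp p x >].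

Lemma ZzpP x : reflect (inZzp p x) (x \in Zzp).
Proof. exact: asboolP. Qed.

Fact Zzp_subring_closed : subring_closed Zzp.
Proof.
split; first by apply/ZzpP; exists 0%N, 1; rewrite mulr1 rmorph1 hornerC.
- move=> x y /ZzpP[k [P eP]] /ZzpP[l [Q eQ]]; apply/ZzpP; exists (k + l)%N.
  exists (P * (p%:Z ^+ l)%:P - Q * (p%:Z ^+ k)%:P).
  rewrite rmorphB !rmorphM /= !map_polyC !hornerE -eP -eQ /= !rmorphXn /= !pmulrn exprD.
  by ring.
- move=> x y /ZzpP[k [P eP]] /ZzpP[l [Q eQ]]; apply/ZzpP; exists (k + l)%N, (P * Q).
  by rewrite rmorphM /= hornerM -eP -eQ exprD; ring.
Qed.

HB.instance Definition _ := GRing.isSubringClosed.Build algC Zzp Zzp_subring_closed.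

Lemma Zzp_zeta : zeta p \in Zzp.
Proof. by apply/ZzpP; exists 0%N, 'X; rewrite mulr1 map_polyX hornerX. Qed.

Lemma Zzp_zetaX j : zeta p ^+ j \in Zzp.
Proof. exact: rpredX Zzp_zeta. Qed.

Lemma Zzp_invn : p%:R^-1 \in Zzp.
Proof.
have [->|p_gt0] := posnP p; first by rewrite invr0 rpred0.
apply/ZzpP; exists 1%N, 1; rewrite mulVf ?pnatr_eq0 -?lt0n //.
by rewrite rmorph1 hornerC.
Qed.

Lemma Zzp_horner (P : {poly int}) w : w \in Zzp -> (map_poly intr P).[w] \in Zzp.
Proof.
by move=> Zw; apply: rpred_horner => //; apply/polyOverP => i; rewrite coef_map rpred_int.
Qed.

Lemma Zzp_inv_1subr w :
  (0 < p)%N -> w ^+ p = 1 -> w != 1 -> w \in Zzp -> (1 - w)^-1 \in Zzp.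
Proof.
move=> p_gt0 wp1 w_ne1 Zw.
have sum_w : \sum_(k < p) w ^+ k = 0.
  apply/eqP; move/eqP: (subrX1 w p); rewrite wp1 subrr eq_sym mulf_eq0 subr_eq0.
  by rewrite (negPf w_ne1).
pose S := \sum_(k < p) \sum_(i < k) w ^+ i.
have pE : p%:R = (1 - w) * S.
  have -> : (1 - w) * S = \sum_(k < p) (1 - w ^+ k).
    by rewrite mulr_sumr; apply: eq_bigr => k _; rewrite -opprB mulNr -subrX1 opprB.
  by rewrite sumrB sum_w subr0 sumr_const card_ord.
have -> : (1 - w)^-1 = S * p%:R^-1.
  have w1_ne0 : 1 - w != 0 by rewrite subr_eq0 eq_sym.
  by apply: (mulfI w1_ne0); rewrite mulfV // mulrA -pE mulfV // pnatr_eq0 -lt0n.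
rewrite rpredM ?Zzp_invn // rpred_sum // => k _.
by rewrite rpred_sum // => i _; rewrite rpredX.
Qed.

Lemma Qzeta_scale_Zzp x : inQzeta p x -> exists2 m : nat, (0 < m)%N & m%:R * x \in Zzp.
Proof.
case=> P ->; have [Q [a a_ne0 ->]] := rat_poly_scale P.
exists `|a|%N; first by rewrite absz_gt0.
rewrite map_polyZ hornerZ fmorphV rmorph_int -map_poly_comp.
have -> : map_poly (ratr \o intr) Q = map_poly intr Q :> {poly algC}.
  by apply: eq_map_poly => c /=; rewrite ratr_int.
rewrite pmulrn abszEsign rmorphM /= rmorphXn rmorphN1 -mulrA mulVKf ?intr_eq0 //.
by rewrite rpredMsign Zzp_horner ?Zzp_zeta.
Qed.

End ZetaRing.

Lemma Zzp_inv_1sub_zetaX p j : prime p -> ~~ (p %| j)%N -> (1 - zeta p ^+ j)^-1 \in Zzp p.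
Proof.
move=> p_pr pNj; have p_gt0 := prime_gt0 p_pr.
apply: Zzp_inv_1subr => //; last exact: Zzp_zetaX.
  by rewrite exprAC zetaXp // expr1n.
by rewrite -(prim_order_dvd (zeta_prim p_pr)).
Qed.

Lemma Zzp_inv_1sub_zeta p : prime p -> (1 - zeta p)^-1 \in Zzp p.
Proof.
by move=> p_pr; rewrite -[zeta p]expr1 Zzp_inv_1sub_zetaX // -prime_coprime ?coprimen1.
Qed.

Section DivisibilityInZzp.
Variables (p : nat) (a : algC).

Definition dvdZzp : {pred algC} := fun x => `[< exists2 y, y \in Zzp p & x = a * y >].

Lemma dvdZzpP x : reflect (exists2 y, y \in Zzp p & x = a * y) (x \in dvdZzp).
Proof. exact: asboolP. Qed.

Fact dvdZzp_zmod_closed : zmod_closed dvdZzp.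
Proof.
split; first by apply/dvdZzpP; exists 0; rewrite ?rpred0 ?mulr0.
move=> _ _ /dvdZzpP[x Zx ->] /dvdZzpP[y Zy ->].
by apply/dvdZzpP; exists (x - y); rewrite ?rpredB ?mulrBr.
Qed.

HB.instance Definition _ := GRing.isZmodClosed.Build algC dvdZzp dvdZzp_zmod_closed.

Lemma dvdZzp_mul x : x \in Zzp p -> a * x \in dvdZzp.
Proof. by move=> Zx; apply/dvdZzpP; exists x. Qed.

Lemma dvdZzp_mulr x y : x \in dvdZzp -> y \in Zzp p -> x * y \in dvdZzp.
Proof. by case/dvdZzpP=> z Zz -> Zy; rewrite -mulrA dvdZzp_mul ?rpredM. Qed.

Lemma dvdZzp_mull x y : x \in dvdZzp -> y \in Zzp p -> y * x \in dvdZzp.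
Proof. by rewrite mulrC; apply: dvdZzp_mulr. Qed.

Lemma dvdZzp_Zzp x : a \in Zzp p -> x \in dvdZzp -> x \in Zzp p.
Proof. by move=> Za /dvdZzpP[y Zy ->]; rewrite rpredM. Qed.

Lemma dvdZzpX x n : a \in Zzp p -> x \in dvdZzp -> (0 < n)%N -> x ^+ n \in dvdZzp.
Proof.
by move=> Za ax; case: n => // n _; rewrite exprS dvdZzp_mulr ?rpredX ?(dvdZzp_Zzp Za).
Qed.

End DivisibilityInZzp.

Lemma dvdZzp_int p (m c : int) : (m %| c)%Z -> c%:~R \in dvdZzp p m%:~R.
Proof. by case/dvdzP=> k ->; rewrite rmorphM mulrC dvdZzp_mul ?rpred_int. Qed.

Lemma dvdZzp_coprime p q n x : (0 < q)%N -> coprime q n -> x \in Zzp p ->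
  n%:R * x \in dvdZzp p q%:R -> x \in dvdZzp p q%:R.
Proof.
move=> q_gt0 co_qn Zx qnx; have [a _] := Bezoutl n q_gt0.
rewrite (eqP co_qn) => /dvdnP[b /(congr1 (fun k => k%:R : algC))].
rewrite /= natrD !natrM => abE.
have -> : x = q%:R * (b%:R * x) - a%:R * (n%:R * x).
  by rewrite !mulrA [q%:R * _]mulrC -abE; ring.
apply: rpredB; first by rewrite dvdZzp_mul ?rpredM ?rpred_nat.
by rewrite dvdZzp_mull ?rpred_nat.
Qed.

Lemma fermat_littlez q (c : int) : prime q -> (q%:Z %| c ^+ q - c)%Z.
Proof.
move=> q_pr; rewrite (dvdz_pcharf (pchar_Fp q_pr)) rmorphB rmorphXn /=.
by have := expf_card (c%:~R : 'F_q); rewrite card_Fp // => ->; rewrite subrr.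
Qed.

Section Frobenius.
Variables (p q : nat).
Hypothesis q_pr : prime q.
Local Notation qZ := (dvdZzp p q%:R).

Lemma dvdZzp_frobeniusD x y : x \in Zzp p -> y \in Zzp p ->
  (x + y) ^+ q - x ^+ q - y ^+ q \in qZ.
Proof.
move=> Zx Zy; have [q' Dq] : exists q', q = q'.+1 by exists q.-1; rewrite prednK ?prime_gt0.
rewrite exprDn Dq big_ord_recr big_ord_recl /= subnn subn0 bin0 binn !expr0 mulr1 mul1r.
have cancel_ends (r s v : algC) : r *+ 1 + s + v *+ 1 - r - v = s by ring.
rewrite -Dq cancel_ends; apply: rpred_sum => i _.
have /dvdnP[k ->] : (q %| 'C(q, bump 0 i))%N.
  by rewrite prime_dvd_bin // /bump /= add1n Dq ltnS ltn_ord.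
by rewrite mulrnA -[_ *+ q]mulr_natl dvdZzp_mul ?rpredMn ?rpredM ?rpredX.
Qed.

Lemma dvdZzp_frobenius_int (c : int) : c%:~R ^+ q - c%:~R \in qZ.
Proof. by rewrite -rmorphXn -rmorphB /= pmulrn dvdZzp_int ?fermat_littlez. Qed.

Lemma dvdZzp_frobenius_horner (P : {poly int}) w : w \in Zzp p ->
  (map_poly intr P).[w] ^+ q - (map_poly intr P).[w ^+ q] \in qZ.
Proof.
move=> Zw; elim/poly_ind: P => [|P c IH].
  by rewrite rmorph0 !horner0 expr0n /= (gtn_eqF (prime_gt0 q_pr)) subrr rpred0.
rewrite rmorphD rmorphM /= map_polyX map_polyC !hornerE.
set A := (map_poly intr P).[w]; set B := (map_poly intr P).[w ^+ q].
have ZA : A \in Zzp p by apply: Zzp_horner.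
have -> : (A * w + c%:~R) ^+ q - (B * w ^+ q + c%:~R) =
   ((A * w + c%:~R) ^+ q - (A * w) ^+ q - c%:~R ^+ q) + (A ^+ q - B) * w ^+ q
   + (c%:~R ^+ q - c%:~R).
  by rewrite exprMn; ring.
apply: rpredD; last exact: dvdZzp_frobenius_int.
by rewrite rpredD ?dvdZzp_mulr ?dvdZzp_frobeniusD ?rpredX ?rpredM ?rpred_int.
Qed.

(* Frobenius sends y(zeta) to y(zeta^q) modulo q; after totient p steps it is back at
   y(zeta), because q ^ totient p = 1 modulo p. *)
Lemma dvdZzp_of_exprq y :
  (0 < p)%N -> coprime q p -> y \in Zzp p -> y ^+ q \in qZ -> y \in qZ.
Proof.
move=> p_gt0 co_qp /ZzpP[k [P yE]] yq.
set Y := (map_poly intr P).[zeta p] in yE.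
have frob w : w \in Zzp p -> (map_poly intr P).[w] ^+ q \in qZ ->
    (map_poly intr P).[w ^+ q] \in qZ.
  move=> Zw Pwq; rewrite -(subKr ((map_poly intr P).[w] ^+ q) (map_poly intr P).[_]).
  by rewrite rpredB ?dvdZzp_frobenius_horner.
have iter n : (map_poly intr P).[zeta p ^+ (q ^ n)] ^+ q \in qZ.
  elim: n => [|n IH].
    by rewrite expn0 expr1 -/Y -yE exprMn -exprM dvdZzp_mulr ?rpredX ?rpred_nat.
  rewrite expnSr exprM; apply: dvdZzpX; rewrite ?rpred_nat ?prime_gt0 //.
  by apply: frob; rewrite ?Zzp_zetaX.
have zeta_qphi : zeta p ^+ (q ^ totient p) = zeta p.
  rewrite -(expr_mod _ (zetaXp p_gt0)) Euler_exp_totient //.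
  by rewrite expr_mod ?zetaXp // expr1.
have YqZ : Y \in qZ.
  have phi_gt0 : (0 < totient p)%N by rewrite totient_gt0.
  rewrite /Y -zeta_qphi -(prednK phi_gt0) expnSr exprM.
  by apply: frob; rewrite ?Zzp_zetaX.
have -> : y = Y * p%:R^-1 ^+ k by rewrite -yE exprVn mulfK // expf_neq0 // pnatr_eq0 -lt0n.
by rewrite dvdZzp_mulr ?rpredX ?Zzp_invn.
Qed.

End Frobenius.

Lemma dvdZzp_lift_exponent p q A c : A \in Zzp p -> c \in Zzp p ->
  (A + q%:R * c) ^+ q - A ^+ q \in dvdZzp p (q%:R ^+ 2).
Proof.
move=> ZA Zc.
rewrite exprDn big_ord_recl subn0 expr0 mulr1 bin0 mulr1n addrAC subrr add0r.
apply: rpred_sum => -[[|j] ?] _ /=.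
  have -> : A ^+ (q - 1) * (q%:R * c) ^+ 1 *+ 'C(q, 1) = q%:R ^+ 2 * (A ^+ (q - 1) * c).
    by rewrite bin1 -mulr_natr expr1; ring.
  by rewrite dvdZzp_mul ?rpredM ?rpredX.
have -> : (q%:R * c) ^+ j.+2 = q%:R ^+ 2 * (c ^+ 2 * (q%:R * c) ^+ j).
  by rewrite !exprS; ring.
by apply: rpredMn; rewrite mulrCA dvdZzp_mul // ?rpredM ?rpredX ?rpredM ?rpred_nat.
Qed.

Definition frob_defect (q : nat) : {poly int} :=
  \poly_(i < q) ((-1) ^+ i * ('C(q, i) %/ q)%:Z).

Lemma frob_defectE (R : comNzRingType) q (w : R) : prime q -> odd q ->
  (1 - w) ^+ q = 1 - w ^+ q + q%:R * (map_poly intr (frob_defect q)).[w].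
Proof.
move=> q_pr q_odd.
have size_h : (size (map_poly intr (frob_defect q) : {poly R}) <= q)%N.
  exact: leq_trans (size_poly _ _) (size_poly _ _).
rewrite (horner_coef_wide _ size_h) mulr_sumr addrC exprD1n big_ord_recr /= binn mulr1n.
rewrite exprNn -signr_odd q_odd expr1 mulN1r addrAC; congr (_ + _).
case: q q_pr {q_odd size_h} => // q q_pr.
rewrite !big_ord_recl /= coef_map coef_poly /= bin0 divn_small ?prime_gt1 //.
rewrite mulr0 rmorph0 mul0r mulr0 add0r expr0 mulr1n; congr (1 + _).
apply: eq_bigr => i _; rewrite coef_map coef_poly /bump /= add1n ltnS ltn_ord.
have /dvdnP[c ->] : (q.+1 %| 'C(q.+1, i.+1))%N by rewrite prime_dvd_bin //= ltnS ltn_ord.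
rewrite mulnK // rmorphM rmorphXn rmorphN1 /= -pmulrn -mulr_natr natrM exprNn.
by ring.
Qed.

Lemma Cyclotomic_dvd_of_root n (z : algC) (D : {poly int}) :
  n.-primitive_root z -> root (map_poly intr D) z -> exists T, D = T * 'Phi_n.
Proof.
move=> prim_z Dz; have Phi_monic := Cyclotomic_monic n.
set R := Pdiv.CommonRing.rmodp D 'Phi_n.
have DE := Pdiv.RingMonic.rdivp_eq Phi_monic D.
exists (Pdiv.CommonRing.rdivp D 'Phi_n); rewrite [LHS]DE -/R.
suff -> : R = 0 by rewrite addr0.
have Rz : root (map_poly intr R) z.
  have Phiz : root (map_poly intr 'Phi_n) z.
    by rewrite (Cintr_Cyclotomic prim_z) root_cyclotomic.
  by move: Dz; rewrite DE rmorphD rmorphM /= rootE !hornerE (rootP Phiz) mulr0 add0r.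
apply/eqP; apply: contraT => R_ne0.
have [pz [Dpz _] dvd_pz] := minCpolyP z.
have size_pz : size pz = size 'Phi_n.
  rewrite size_Cyclotomic -(size_cyclotomic z) -(minCpoly_cyclotomic prim_z) Dpz.
  by rewrite size_map_inj_poly ?rmorph0 //; apply: fmorph_inj.
have : (pz %| map_poly intr R)%R.
  rewrite -dvd_pz -map_poly_comp; congr (root _ z): Rz.
  by apply: eq_map_poly => c /=; rewrite ratr_int.
move/dvdp_leq; rewrite map_poly_eq0_id0 ?intr_eq0 ?lead_coef_eq0 // => /(_ R_ne0).
rewrite size_map_inj_poly ?rmorph0 //; last exact: (@intr_inj rat).
by rewrite size_pz leqNgt Pdiv.CommonRing.ltn_rmodpN0 ?monic_neq0.
Qed.

(* The left-hand side has size at most q < p = size Phi_p and coefficient -c at X. *)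
Lemma Cyclotomic_ndvd_frob_defect_Fp p q (c : 'F_q) (T : {poly 'F_q}) :
  prime p -> prime q -> (q < p)%N -> c != 0 ->
  map_poly intr (frob_defect q) * c%:P != T * map_poly intr 'Phi_p.
Proof.
move=> p_pr q_pr lt_qp c_ne0; apply/eqP => hE.
have T0 : T = 0.
  apply: contraTeq lt_qp => T_ne0; rewrite -leqNgt.
  have size_Phi : size (map_poly intr 'Phi_p : {poly 'F_q}) = p.
    rewrite size_map_poly_id0 ?(monicP (Cyclotomic_monic p)) ?rmorph1 ?oner_eq0 //.
    by rewrite size_Cyclotomic totient_prime // prednK ?prime_gt0.
  have : (size (T * map_poly intr 'Phi_p)%R <= q)%N.
    rewrite -hE mulrC mul_polyC (leq_trans (size_scale_leq _ _)) //.
    exact: leq_trans (size_poly _ _) (size_poly _ _).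
  rewrite (size_Mmonic T_ne0) ?monic_map ?Cyclotomic_monic // size_Phi.
  by rewrite -size_poly_gt0 in T_ne0; lia.
have h1 : (frob_defect q)`_1 = -1.
  by rewrite coef_poly prime_gt1 // bin1 divnn prime_gt0 // expr1 mulN1r.
move: c_ne0; have := congr1 (fun P : {poly 'F_q} => P`_1) hE.
rewrite T0 mul0r coef0 coefMC coef_map h1 /= mulrN1z mulN1r => /eqP.
by rewrite oppr_eq0 => /eqP ->; rewrite eqxx.
Qed.

Lemma frob_defect_zeta_notin p q : prime p -> prime q -> (q < p)%N ->
  (map_poly intr (frob_defect q)).[zeta p] \notin dvdZzp p q%:R.
Proof.
move=> p_pr q_pr lt_qp; apply/negP => /dvdZzpP[s /ZzpP[k [S sE]] hE].
pose D := frob_defect q * (p%:Z ^+ k)%:P - S * (q%:Z)%:P.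
have [T DE] : exists T, D = T * 'Phi_p.
  apply: Cyclotomic_dvd_of_root (zeta_prim p_pr) _; apply/rootP.
  rewrite /D rmorphB !rmorphM /= !map_polyC !hornerE hE -sE /= rmorphXn /= -!pmulrn.
  by ring.
have pk_ne0 : (p%:Z ^+ k)%:~R != 0 :> 'F_q.
  rewrite rmorphXn /= -pmulrn -natrX -(dvdn_pcharf (pchar_Fp q_pr)) Euclid_dvdX //.
  by rewrite dvdn_prime2 // ltn_eqF.
apply: (negP (Cyclotomic_ndvd_frob_defect_Fp (map_poly intr T) p_pr q_pr lt_qp pk_ne0)).
have fq : q%:~R = 0 :> 'F_q by rewrite -pmulrn pchar_Fp_0.
by rewrite -rmorphM -DE /D rmorphB !rmorphM /= !map_polyC /= fq polyC0 mulr0 subr0.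
Qed.

Lemma inC_frob_quotient p q : prime p -> ~~ (p %| q)%N ->
  inC p ((1 - zeta p ^+ q) / (1 - zeta p) ^+ q).
Proof.
move=> p_pr pNq.
have z1_ne0 : 1 - zeta p != 0 by rewrite subr_eq0 eq_sym zeta_neq1 ?prime_gt1.
have zq_ne0 : 1 - zeta p ^+ q != 0.
  by rewrite subr_eq0 eq_sym -(prim_order_dvd (zeta_prim p_pr)).
have Zinv1 := Zzp_inv_1sub_zeta p_pr.
have Zinvq := Zzp_inv_1sub_zetaX p_pr pNq.
have Zz1 : 1 - zeta p \in Zzp p by rewrite rpredB ?rpred1 ?Zzp_zeta.
have Zzq : 1 - zeta p ^+ q \in Zzp p by rewrite rpredB ?rpred1 ?Zzp_zetaX.
split; [split|].
- by apply/ZzpP; rewrite -exprVn rpredM ?rpredX.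
- exists ((1 - zeta p) ^+ q / (1 - zeta p ^+ q)).
  split; first by apply/ZzpP; rewrite rpredM ?rpredX.
  by rewrite mulrA divfK ?expf_neq0 // mulfV.
exists q, 1%N, 1, (1 - q%:Z); split; first by rewrite expr1.
split; first by exists 1%N.
by rewrite expfzDr // expr1z -exprnN expr1 mulr1 mulrA divfK.
Qed.

Section Descent.
Variables (p q : nat) (t : algC).
Hypotheses (p_gt0 : (0 < p)%N) (q_pr : prime q) (co_qp : coprime q p).
Hypotheses (Zt : t \in Zzp p) (t_notin : t \notin dvdZzp p q%:R).
Local Notation u := (1 - q%:R * t).
Local Notation qZ := (dvdZzp p q%:R).

Lemma no_qth_power_coprime Z n c : Z \in Zzp p -> coprime q n -> c \in Zzp p ->
  u * Z ^+ q != n%:R ^+ q * (1 + q%:R ^+ 2 * c).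
Proof.
move=> ZZ co_qn Zc; apply/eqP => uZE; have Zn := rpred_nat (Zzp p) n.
have q_ne0 : q%:R != 0 :> algC by rewrite pnatr_eq0 -lt0n prime_gt0.
have qZq : Z ^+ q - n%:R ^+ q \in qZ.
  have -> : Z ^+ q - n%:R ^+ q = q%:R * (t * Z ^+ q + q%:R * (n%:R ^+ q * c))
                              + (u * Z ^+ q - n%:R ^+ q * (1 + q%:R ^+ 2 * c)) by ring.
  by rewrite uZE subrr addr0 dvdZzp_mul ?rpredD ?rpredM ?rpredX ?rpred_nat.
have /dvdZzpP[c1 Zc1 ZE] : Z - n%:R \in qZ.
  apply: dvdZzp_of_exprq; rewrite ?rpredB //.
  have := dvdZzp_frobeniusD q_pr (rpredB ZZ Zn) Zn; rewrite subrK => frob.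
  have -> : (Z - n%:R) ^+ q =
      (Z ^+ q - n%:R ^+ q) - (Z ^+ q - (Z - n%:R) ^+ q - n%:R ^+ q) by ring.
  exact: rpredB.
have [c2 Zc2 ZqE] : exists2 c2, c2 \in Zzp p & Z ^+ q = n%:R ^+ q + q%:R ^+ 2 * c2.
  have /dvdZzpP[c2 Zc2 E] := dvdZzp_lift_exponent q Zn Zc1.
  by exists c2; rewrite // -E -ZE !subrKC.
have key : q%:R * (n%:R ^+ q * t - q%:R * (c2 - q%:R * t * c2 - n%:R ^+ q * c))
           = n%:R ^+ q * (1 + q%:R ^+ 2 * c) - u * Z ^+ q by rewrite ZqE; ring.
move/eqP: key; rewrite uZE subrr mulf_eq0 (negPf q_ne0) subr_eq0 => /eqP ntE.
apply: (negP t_notin); apply: (dvdZzp_coprime (prime_gt0 q_pr) (coprimeXr q co_qn)) => //.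
by rewrite natrX ntE dvdZzp_mul // !rpredB ?rpredM ?rpredX ?rpred_nat.
Qed.

Lemma qth_power_descent v Z n e c :
  v \in Zzp p -> u * v = 1 -> Z \in Zzp p -> c \in Zzp p ->
  u * Z ^+ q = (n * q ^ e.+1)%:R ^+ q * (1 + q%:R ^+ 2 * c) ->
  exists2 Z', Z' \in Zzp p & u * Z' ^+ q = (n * q ^ e)%:R ^+ q * (1 + q%:R ^+ 2 * c).
Proof.
move=> Zv uv ZZ Zc uZE.
have mE : (n * q ^ e.+1)%:R = q%:R * (n * q ^ e)%:R :> algC by rewrite expnS mulnCA natrM.
have qZq : Z ^+ q \in qZ.
  have -> : Z ^+ q = v * (u * Z ^+ q) by rewrite mulrA [v * u]mulrC uv mul1r.
  rewrite dvdZzp_mull // uZE mE dvdZzp_mulr //.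
    by rewrite dvdZzpX ?rpred_nat ?prime_gt0 ?dvdZzp_mul ?rpred_nat.
  by rewrite rpredD ?rpred1 ?rpredM ?rpredX ?rpred_nat.
case/dvdZzpP: (dvdZzp_of_exprq q_pr p_gt0 co_qp ZZ qZq) => Z' ZZ' ZE.
have q_ne0 : q%:R != 0 :> algC by rewrite pnatr_eq0 -lt0n prime_gt0.
exists Z' => //; apply: (mulfI (expf_neq0 q q_ne0)).
by rewrite mulrCA -exprMn -ZE uZE mE exprMn mulrA.
Qed.

Lemma no_qth_power v Z m c : v \in Zzp p -> u * v = 1 -> (0 < m)%N ->
  Z \in Zzp p -> c \in Zzp p -> u * Z ^+ q != m%:R ^+ q * (1 + q%:R ^+ 2 * c).
Proof.
move=> Zv uv m_gt0; have [n co_qn ->] := pfactor_coprime q_pr m_gt0.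
elim: (logn q m) Z => [|e IHe] Z ZZ Zc; first by rewrite expn0 muln1 no_qth_power_coprime.
apply/negP => /eqP/(qth_power_descent Zv uv ZZ Zc)[Z' ZZ' uZE'].
by move: (IHe Z' ZZ' Zc); rewrite uZE' eqxx.
Qed.

Lemma not_inE'_1subq : ~ inE' p q u.
Proof.
case=> [[_ [v [/ZzpP Zv uv]]]
         [x [b [g [Qx [_ [_ [/ZzpP Zg [[d [e [/ZzpP Zd [/ZzpP Ze bdE]]]] uxE]]]]]]]]].
have [m m_gt0 Zmx] := Qzeta_scale_Zzp Qx.
have [c2 Zc2 bdqE] : exists2 c2, c2 \in Zzp p & (b * d) ^+ q = 1 + q%:R ^+ 2 * c2.
  have /dvdZzpP[c2 Zc2 E] :=
    dvdZzp_lift_exponent q (rpred1 (Zzp p)) (rpredM (rpred_nat _ q) Ze).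
  by exists c2 => //; rewrite bdE expr2 -mulrA -E expr1n subrKC.
have ZmxdE : u * (m%:R * x * d) ^+ q = m%:R ^+ q * (1 + q%:R ^+ 2 * (c2 + g * d ^+ q)).
  apply/eqP; rewrite -subr_eq0.
  have -> : u * (m%:R * x * d) ^+ q - m%:R ^+ q * (1 + q%:R ^+ 2 * (c2 + g * d ^+ q)) =
      (m%:R * d) ^+ q * (u * x ^+ q - (b ^+ q + q%:R ^+ 2 * g))
      + m%:R ^+ q * ((b * d) ^+ q - (1 + q%:R ^+ 2 * c2)) by rewrite !exprMn; ring.
  by rewrite uxE bdqE !subrr !mulr0 addr0.
have Zc : c2 + g * d ^+ q \in Zzp p by rewrite rpredD ?rpredM ?rpredX.
by have := no_qth_power Zv uv m_gt0 (rpredM Zmx Zd) Zc; rewrite ZmxdE eqxx.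
Qed.

End Descent.

Theorem mainTheorem17 (p q : nat) :
  prime p -> prime q -> odd p -> odd q -> p != q ->
  (forall u : algC, inC p u -> inE' p q u) ->
  (p < q)%N.
Proof.
move=> p_pr q_pr _ q_odd p_ne_q C_sub_E'.
case: ltngtP p_ne_q => // lt_qp _.
have pNq : ~~ (p %| q)%N by rewrite dvdn_prime2 // gtn_eqF.
have co_qp : coprime q p by rewrite prime_coprime // dvdn_prime2 // ltn_eqF.
have zq_ne0 : (1 - zeta p) ^+ q != 0.
  by rewrite expf_neq0 // subr_eq0 eq_sym zeta_neq1 ?prime_gt1.
pose t := (map_poly intr (frob_defect q)).[zeta p] / (1 - zeta p) ^+ q.
have uE : 1 - q%:R * t = (1 - zeta p ^+ q) / (1 - zeta p) ^+ q.
  apply: (mulIf zq_ne0); rewrite mulrBl mul1r mulrA !divfK //.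
  by rewrite (frob_defectE _ q_pr q_odd) addrK.
have Zt : t \in Zzp p.
  by rewrite rpredM ?Zzp_horner ?Zzp_zeta // -exprVn rpredX ?Zzp_inv_1sub_zeta.
have t_notin : t \notin dvdZzp p q%:R.
  apply: contra (frob_defect_zeta_notin p_pr q_pr lt_qp) => qt.
  rewrite -(divfK zq_ne0 (map_poly _ _).[_]) dvdZzp_mulr // rpredX //.
  by rewrite rpredB ?rpred1 ?Zzp_zeta.
case: (not_inE'_1subq (prime_gt0 p_pr) q_pr co_qp Zt t_notin).
by rewrite uE; apply/C_sub_E'/inC_frob_quotient.
Qed.
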